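(* For every stream covering $\rho:E\to B$, the induced functors $\mathrm{T}_1(\rho):\mathrm{T}_1E\to\mathrm{T}_1B$ and $\mathrm{T}_1(\rho)^{op}:(\mathrm{T}_1E)^{op}\to(\mathrm{T}_1B)^{op}$ are op-fibrations of small categories.
   Context: Streams: a circulation on a space $X$ assigns to each open $V\subset X$ a preorder $\leqslant_V$ such that for every collection $\mathcal{O}$ of open sets, $\leqslant_{\bigcup\mathcal{O}}$ is the preorder with smallest graph containing $\bigcup_{V\in\mathcal{O}}\mathrm{graph}(\leqslant_V)$; a stream is a space with a circulation; a stream map $f:X\to Y$ is continuous with $f(x)\leqslant_V f(y)$ whenever $x\leqslant_{f^{-1}V}y$. An open substream of $X$ is an open $V$ with circulation $W\mapsto\leqslant_W$. A stream covering is a surjective stream map $\rho:E\to B$ such that $B$ is covered by open substreams whose preimages are disjoint unions of open substreams each mapped by $\rho$ isomorphically (as streams) onto the corresponding open substream. $\vec\square[1]$ is $[0,1]$ with circulation $x\leqslant_V y$ iff $x\le y$ and $[x,y]\subset V$; a dipath is a stream map from $\vec\square[1]$. The fundamental category $\mathrm{T}_1X$ has the points of $X$ as objects and, as morphisms $x\to y$, classes of dipaths $x\leadsto y$ modulo homotopy relative $\{0,1\}$ through dipaths, composed by concatenation; $\mathrm{T}_1$ is functorial in stream maps. A functor $F:\mathcal{C}\to\mathcal{D}$ is an op-fibration if for each object $c$ of $\mathcal{C}$, every morphism of $\mathcal{D}$ with source $F(c)$ lifts uniquely along $F$ to a morphism of $\mathcal{C}$ with source $c$. *)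

From Stdlib Require Import Reals Relations.
Open Scope R_scope.

Record prestream := {
  car : Type;
  sopen : (car -> Prop) -> Prop;
  circ : (car -> Prop) -> car -> car -> Prop
}.

Definition bigU {X : Type} (O : (X -> Prop) -> Prop) : X -> Prop :=
  fun x => exists V, O V /\ V x.

(** A stream: the open sets form a topology, and the circulation axiom holds:
    for every collection O of open sets, <=_{U O} is the preorder on U O with
    smallest graph containing the union of the graphs of the <=_V, V in O.
    (Extensionality clauses make opens/circulation depend only on the set.) *)
Definition is_stream (X : prestream) : Prop :=
  sopen X (fun _ => True) /\
  (forall O : (car X -> Prop) -> Prop,
      (forall V, O V -> sopen X V) -> sopen X (bigU O)) /\
  (forall U V, sopen X U -> sopen X V -> sopen X (fun x => U x /\ V x)) /\
  (forall U V : car X -> Prop, (forall x, U x <-> V x) -> sopen X U -> sopen X V) /\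
  (forall U V : car X -> Prop, (forall x, U x <-> V x) ->
      forall x y, circ X U x y <-> circ X V x y) /\
  (forall O : (car X -> Prop) -> Prop,
      (forall V, O V -> sopen X V) ->
      forall x y, circ X (bigU O) x y <->
        (bigU O x /\ bigU O y /\
         clos_refl_trans (car X) (fun a b => exists V, O V /\ circ X V a b) x y)).

Definition is_stream_map (X Y : prestream) (f : car X -> car Y) : Prop :=
  (forall V, sopen Y V -> sopen X (fun x => V (f x))) /\
  (forall V, sopen Y V -> forall x y,
      circ X (fun z => V (f z)) x y -> circ Y V (f x) (f y)).

Definition is_stream_iso (X Y : prestream) (f : car X -> car Y) : Prop :=
  exists g : car Y -> car X,
    is_stream_map X Y f /\ is_stream_map Y X g /\
    (forall x, g (f x) = x) /\ (forall y, f (g y) = y).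

Definition substream (X : prestream) (V : car X -> Prop) : prestream := {|
  car := { x : car X | V x };
  sopen := fun P => exists W, sopen X W /\ forall s, P s <-> W (proj1_sig s);
  circ := fun P a b =>
    circ X (fun z => exists s, P s /\ proj1_sig s = z) (proj1_sig a) (proj1_sig b)
|}.

(** U is evenly covered: its preimage is a disjoint union of open substreams,
    each mapped by rho isomorphically (as streams) onto the substream U. *)
Definition evenly_covered (E B : prestream) (rho : car E -> car B)
    (U : car B -> Prop) : Prop :=
  exists F : (car E -> Prop) -> Prop,
    (forall W, F W -> sopen E W) /\
    (forall x, U (rho x) <-> bigU F x) /\
    (forall W1 W2 x, F W1 -> F W2 -> W1 x -> W2 x -> forall z, W1 z <-> W2 z) /\
    (forall W, F W ->
       exists phi : car (substream E W) -> car (substream B U),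
         (forall s, proj1_sig (phi s) = rho (proj1_sig s)) /\
         is_stream_iso (substream E W) (substream B U) phi).

Definition is_stream_covering (E B : prestream) (rho : car E -> car B) : Prop :=
  is_stream_map E B rho /\
  (forall b, exists x, rho x = b) /\
  (forall b, exists U, sopen B U /\ U b /\ evenly_covered E B rho U).

Definition Ropen (U : R -> Prop) : Prop :=
  forall x, U x -> exists eps, 0 < eps /\ forall y, Rabs (y - x) < eps -> U y.

Definition I01 : prestream := {|
  car := { t : R | 0 <= t <= 1 };
  sopen := fun P => exists W, Ropen W /\ forall s, P s <-> W (proj1_sig s);
  circ := fun P a b => proj1_sig a <= proj1_sig b /\
            forall s, proj1_sig a <= proj1_sig s <= proj1_sig b -> P s
|}.

Lemma i0_proof : 0 <= 0 <= 1. Proof. split; [apply Rle_refl | apply Rle_0_1]. Qed.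
Lemma i1_proof : 0 <= 1 <= 1. Proof. split; [apply Rle_0_1 | apply Rle_refl]. Qed.
Definition i0 : car I01 := exist _ 0 i0_proof.
Definition i1 : car I01 := exist _ 1 i1_proof.

Definition is_dipath (X : prestream) (g : car I01 -> car X) : Prop :=
  is_stream_map I01 X g.

Definition sq_open (P : car I01 -> car I01 -> Prop) : Prop :=
  forall s t, P s t -> exists eps, 0 < eps /\ forall s' t',
    Rabs (proj1_sig s' - proj1_sig s) < eps ->
    Rabs (proj1_sig t' - proj1_sig t) < eps -> P s' t'.

Definition dihomotopic (X : prestream) (g h : car I01 -> car X) : Prop :=
  exists H : car I01 -> car I01 -> car X,
    (forall V, sopen X V -> sq_open (fun s t => V (H s t))) /\
    (forall s, is_dipath X (H s)) /\
    (forall s, H s i0 = g i0 /\ H s i1 = g i1) /\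
    (forall t, H i0 t = g t) /\
    (forall t, H i1 t = h t).

(** * Categories presented by objects, (valid) arrows with source/target,
    and an equality relation on arrows (morphisms = arrows up to aeq). *)
Record catP := {
  Ob : Type;
  Arr : Type;
  isArr : Arr -> Prop;
  src : Arr -> Ob;
  tgt : Arr -> Ob;
  aeq : Arr -> Arr -> Prop
}.

Definition opcat (C : catP) : catP := {|
  Ob := Ob C; Arr := Arr C; isArr := isArr C;
  src := tgt C; tgt := src C; aeq := aeq C |}.

Record functorP (C D : catP) := {
  Fob : Ob C -> Ob D;
  Farr : Arr C -> Arr D
}.
Arguments Fob {C D} _ _.
Arguments Farr {C D} _ _.

Definition opfunctor {C D : catP} (F : functorP C D) : functorP (opcat C) (opcat D) :=
  Build_functorP (opcat C) (opcat D) (Fob F) (Farr F).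

Definition op_fibration {C D : catP} (F : functorP C D) : Prop :=
  forall (c : Ob C) (g : Arr D), isArr D g -> src D g = Fob F c ->
    (exists f, isArr C f /\ src C f = c /\ aeq D (Farr F f) g) /\
    (forall f1 f2, isArr C f1 -> isArr C f2 -> src C f1 = c -> src C f2 = c ->
       aeq D (Farr F f1) g -> aeq D (Farr F f2) g -> aeq C f1 f2).

(** The fundamental category T1 X: objects are points, morphisms x -> y are
    dipaths x ~> y modulo dihomotopy (composition by concatenation). *)
Definition T1 (X : prestream) : catP := {|
  Ob := car X;
  Arr := car I01 -> car X;
  isArr := is_dipath X;
  src := fun g => g i0;
  tgt := fun g => g i1;
  aeq := dihomotopic X |}.

Definition T1f {X Y : prestream} (f : car X -> car Y) : functorP (T1 X) (T1 Y) :=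
  Build_functorP (T1 X) (T1 Y) f (fun (g : car I01 -> car X) t => f (g t)).

From Stdlib Require Import Reals Relations Lra Lia.
From Stdlib Require Import Classical ClassicalEpsilon ProofIrrelevance FunctionalExtensionality.
Open Scope R_scope.

(** The proof follows classical covering space theory, with directedness
    checked locally.  Lifting a morphism [g] of [T1 B] from a point [c] over
    its source (or, for the opposite functor, over its target) needs:
    - existence of a continuous lift of [g] through [c], which is a dipath
      because inside a sheet [rho] is a stream isomorphism, so the
      circulation of [E] is pulled back from that of [B];
    - uniqueness of the lift up to dihomotopy: two dihomotopies
      [rho f1 ~ g ~ rho f2] are glued into a square map, lifted through [c],
      and the edges of the lifted square are identified with [f1], [f2] and
      constant paths by unique lifting along segments. *)

(** Clamping a real into [0,1]; it extends maps on [0,1] to all of R. *)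
Definition clamp (x : R) : R := Rmax 0 (Rmin 1 x).

Lemma clamp_in x : 0 <= clamp x <= 1.
Proof. unfold clamp, Rmax, Rmin. repeat destruct Rle_dec; lra. Qed.

Lemma clamp_id x : 0 <= x <= 1 -> clamp x = x.
Proof. unfold clamp, Rmax, Rmin. repeat destruct Rle_dec; lra. Qed.

Lemma clamp_lip x y : Rabs (clamp x - clamp y) <= Rabs (x - y).
Proof.
  unfold clamp, Rmax, Rmin. repeat destruct Rle_dec; unfold Rabs; repeat destruct Rcase_abs; lra.
Qed.

Lemma lub_approx (S : R -> Prop) m z : is_lub S m -> z < m -> exists r, S r /\ z < r.
Proof.
  intros [_ Hleast] Hz. apply NNPP. intro Hnone. assert (m <= z); [|lra].
  apply Hleast. intros r Hr. destruct (Rle_dec r z); auto.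
  exfalso; apply Hnone; exists r; split; auto; lra.
Qed.

Lemma lipschitz_continuous (f : R -> R) :
  (forall a b, Rabs (f a - f b) <= Rabs (a - b)) -> forall x, continuity_pt f x.
Proof.
  intros Hf x eps Heps. exists eps. split; auto. intros y [_ Hy]. simpl in *. unfold R_dist in *.
  eapply Rle_lt_trans; [apply Hf|exact Hy].
Qed.

Lemma ball_shrink x r x' r' x'' :
  Rabs (x' - x) + r' <= r -> Rabs (x'' - x') < r' -> Rabs (x'' - x) < r.
Proof.
  intros H1 H2. pose proof (Rabs_triang (x'' - x') (x' - x)) as Htri.
  replace (x'' - x' + (x' - x)) with (x'' - x) in Htri by ring. lra.
Qed.

(** The proof takes [reach x y], the supremum (capped at 1) of
    the good radii, which is positive and 1-Lipschitz, and minimizes it on the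
    compact square, first in [y] and then in [x]. *)
Section Lebesgue.
Variable P : R -> R -> R -> Prop.
Hypothesis P_shrink : forall x y r x' y' r', P x y r -> 0 < r' ->
  Rabs (x' - x) + r' <= r -> Rabs (y' - y) + r' <= r -> P x' y' r'.
Hypothesis P_local : forall x y, 0 <= x <= 1 -> 0 <= y <= 1 -> exists r, 0 < r /\ P x y r.

(** The good radii at the clamped point, together with all nonpositive
    reals so that the set is inhabited. *)
Let good x y r := r <= 0 \/ (r <= 1 /\ P (clamp x) (clamp y) r).

Lemma good_bound x y : bound (good x y).
Proof. exists 1. intros r [H|[H _]]; lra. Qed.
Lemma good_inhabited x y : exists r, good x y r.
Proof. exists 0. left; lra. Qed.

Let reach x y := proj1_sig (completeness (good x y) (good_bound x y) (good_inhabited x y)).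

Lemma reach_lub x y : is_lub (good x y) (reach x y).
Proof. unfold reach. destruct completeness; auto. Qed.

Lemma reach_good x y r : 0 < r -> r <= 1 -> P (clamp x) (clamp y) r -> r <= reach x y.
Proof. intros. apply (proj1 (reach_lub x y)). right; auto. Qed.

Lemma reach_pos x y : 0 < reach x y.
Proof.
  destruct (P_local (clamp x) (clamp y) (clamp_in x) (clamp_in y)) as [r [Hr HP]].
  assert (Hmin : 0 < Rmin r 1 <= 1) by (unfold Rmin; destruct Rle_dec; lra).
  enough (Rmin r 1 <= reach x y) by lra.
  apply reach_good; try lra. eapply P_shrink; [exact HP| | |];
    unfold Rmin; destruct Rle_dec; rewrite ?Rminus_diag, ?Rabs_R0; lra.
Qed.

Lemma reach_lip x y x' y' : reach x y - Rmax (Rabs (x' - x)) (Rabs (y' - y)) <= reach x' y'.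
Proof.
  set (h := Rmax (Rabs (x' - x)) (Rabs (y' - y))).
  assert (Hx : Rabs (x' - x) <= h) by apply Rmax_l.
  assert (Hy : Rabs (y' - y) <= h) by apply Rmax_r.
  destruct (Rle_dec (reach x y - h) (reach x' y')) as [|Hn]; auto. exfalso.
  destruct (lub_approx _ _ (reach x' y' + h) (reach_lub x y)) as [r [Hr Hlt]]; [lra|].
  pose proof (reach_pos x' y'). pose proof (Rabs_pos (x' - x)).
  destruct Hr as [Hr|[Hr1 Hr2]]; [lra|].
  enough (r - h <= reach x' y') by lra.
  apply reach_good; [lra|lra|]. eapply P_shrink; [exact Hr2|lra| |].
  - pose proof (clamp_lip x' x); lra.
  - pose proof (clamp_lip y' y); lra.
Qed.

Lemma reach_lip_y x y y' : Rabs (reach x y - reach x y') <= Rabs (y - y').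
Proof.
  pose proof (reach_lip x y x y') as H1. pose proof (reach_lip x y' x y) as H2.
  rewrite Rminus_diag, Rabs_R0 in *.
  rewrite Rmax_right in H1, H2 by apply Rabs_pos. rewrite Rabs_minus_sym in H1.
  unfold Rabs at 1; destruct Rcase_abs; lra.
Qed.

Lemma argmin_y x : {ym | (forall c, 0 <= c <= 1 -> reach x ym <= reach x c) /\ 0 <= ym <= 1}.
Proof.
  apply constructive_indefinite_description. apply continuity_ab_min; [lra|].
  intros c _. apply lipschitz_continuous. intros; apply reach_lip_y.
Qed.

Let min_reach x := reach x (proj1_sig (argmin_y x)).

Lemma min_reach_le x c : 0 <= c <= 1 -> min_reach x <= reach x c.
Proof. intros Hc. unfold min_reach. destruct (argmin_y x) as [ym [H Hym]]. simpl. auto. Qed.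

Lemma min_reach_lip x x' : min_reach x - Rabs (x' - x) <= min_reach x'.
Proof.
  unfold min_reach at 2. destruct (argmin_y x') as [ym [Hmin Hym]]. simpl.
  pose proof (reach_lip x ym x' ym) as H. rewrite Rminus_diag, Rabs_R0 in H.
  rewrite Rmax_left in H by apply Rabs_pos. pose proof (min_reach_le x ym Hym). lra.
Qed.

Lemma lebesgue_number : exists dl, 0 < dl /\ forall x y, 0 <= x <= 1 -> 0 <= y <= 1 -> P x y dl.
Proof.
  assert (Hcont : forall c, 0 <= c <= 1 -> continuity_pt min_reach c).
  { intros c _. apply lipschitz_continuous. intros a b.
    pose proof (min_reach_lip a b). pose proof (min_reach_lip b a).
    rewrite (Rabs_minus_sym a b) in *. unfold Rabs at 1; destruct Rcase_abs; lra. }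
  destruct (continuity_ab_min min_reach 0 1 ltac:(lra) Hcont) as [xm [Hxm _]].
  assert (Hpos : 0 < min_reach xm) by apply reach_pos.
  exists (min_reach xm / 2). split; [lra|]. intros x y Hx Hy.
  assert (Hd : min_reach xm <= reach x y) by (eapply Rle_trans; [apply (Hxm x Hx)|apply min_reach_le; auto]).
  destruct (lub_approx _ _ (min_reach xm / 2) (reach_lub x y)) as [r [Hr Hlt]]; [lra|].
  destruct Hr as [Hr|[_ Hr]]; [lra|].
  rewrite (clamp_id x Hx), (clamp_id y Hy) in Hr.
  eapply P_shrink; [exact Hr|lra| |]; rewrite ?Rminus_diag, ?Rabs_R0; lra.
Qed.
End Lebesgue.

Lemma lebesgue_number_1d (P : R -> R -> Prop) :
  (forall x r x' r', P x r -> 0 < r' -> Rabs (x' - x) + r' <= r -> P x' r') ->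
  (forall x, 0 <= x <= 1 -> exists r, 0 < r /\ P x r) ->
  exists dl, 0 < dl /\ forall x, 0 <= x <= 1 -> P x dl.
Proof.
  intros Hshrink Hlocal.
  destruct (lebesgue_number (fun x _ r => P x r)) as [dl [Hdl HP]].
  - intros x y r x' y' r' HPx Hr' Hx _. eauto.
  - intros x y Hx _. auto.
  - exists dl. split; auto. intros x Hx. apply (HP x 0 Hx). lra.
Qed.

Lemma chain_forward (Q : R -> Prop) a b dl : 0 < dl -> a <= b -> Q a ->
  (forall t t', a <= t -> t <= t' -> t' <= b -> t' - t < dl -> Q t -> Q t') -> Q b.
Proof.
  intros Hdl Hab Ha Hstep.
  assert (Hn : forall n, Q (Rmin b (a + INR n * (dl / 2)))).
  { induction n as [|n IH].
    - simpl. rewrite Rmult_0_l, Rplus_0_r, Rmin_right by lra. exact Ha.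
    - pose proof (pos_INR n). rewrite S_INR.
      apply (Hstep (Rmin b (a + INR n * (dl / 2)))); auto;
        unfold Rmin; repeat destruct Rle_dec; nra. }
  destruct (INR_archimed (dl / 2) (b - a)) as [n Hn']; [lra|].
  specialize (Hn n). rewrite Rmin_left in Hn by lra. exact Hn.
Qed.

Lemma sig_ext {A : Type} {P : A -> Prop} (a b : {x | P x}) : proj1_sig a = proj1_sig b -> a = b.
Proof. destruct a, b; simpl; intros ->. f_equal. apply proof_irrelevance. Qed.

Definition to_I01 (x : R) : car I01 := exist _ (clamp x) (clamp_in x).

Lemma to_I01_proj (s : car I01) : to_I01 (proj1_sig s) = s.
Proof. apply sig_ext. apply clamp_id. apply proj2_sig. Qed.
Lemma proj_to_I01 x : 0 <= x <= 1 -> proj1_sig (to_I01 x) = x.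
Proof. apply clamp_id. Qed.
Lemma to_I01_0 : to_I01 0 = i0. Proof. apply sig_ext. simpl. apply clamp_id. lra. Qed.
Lemma to_I01_1 : to_I01 1 = i1. Proof. apply sig_ext. simpl. apply clamp_id. lra. Qed.

Definition continuous01 (X : prestream) (f : car I01 -> car X) : Prop :=
  forall V, sopen X V -> sopen I01 (fun s => V (f s)).

Definition cont01 (X : prestream) (l : R -> car X) : Prop :=
  forall V, sopen X V -> forall x, 0 <= x <= 1 -> V (l x) ->
    exists eps, 0 < eps /\ forall x', 0 <= x' <= 1 -> Rabs (x' - x) < eps -> V (l x').

Lemma cont01_ext X (l1 l2 : R -> car X) :
  cont01 X l1 -> (forall x, 0 <= x <= 1 -> l1 x = l2 x) -> cont01 X l2.
Proof.
  intros H Heq V HV x Hx HVx. rewrite <- Heq in HVx by auto.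
  destruct (H V HV x Hx HVx) as [eps [He Hq]].
  exists eps. split; auto. intros. rewrite <- Heq by auto. auto.
Qed.

Lemma cont01_const X (c : car X) : cont01 X (fun _ => c).
Proof. intros V HV x Hx HVx. exists 1. split; [lra|]. auto. Qed.

Lemma continuous01_cont01 X (f : car I01 -> car X) :
  continuous01 X f -> cont01 X (fun x => f (to_I01 x)).
Proof.
  intros Hf V HV x Hx HVx. destruct (Hf V HV) as [W [HW Hiff]].
  assert (Wx : W x) by (rewrite <- (proj_to_I01 x Hx); apply Hiff; auto).
  destruct (HW x Wx) as [eps [He Hq]]. exists eps. split; auto. intros x' Hx' Hd.
  apply Hiff. rewrite proj_to_I01 by auto. auto.
Qed.

Lemma cont01_continuous01 X (f : car I01 -> car X) :
  cont01 X (fun x => f (to_I01 x)) -> continuous01 X f.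
Proof.
  intros Hf V HV.
  exists (fun x => exists eps x0, 0 < eps /\ 0 <= x0 <= 1 /\ Rabs (x - x0) < eps /\
            forall x', 0 <= x' <= 1 -> Rabs (x' - x0) < eps -> V (f (to_I01 x'))).
  split.
  - intros x [eps [x0 (Heps & Hx0 & Hd & Hball)]]. exists (eps - Rabs (x - x0)). split; [lra|].
    intros y Hy. exists eps, x0. do 3 (split; auto).
    pose proof (Rabs_triang (y - x) (x - x0)) as Htri.
    replace (y - x + (x - x0)) with (y - x0) in Htri by ring. lra.
  - intros s. split.
    + intros Hs. rewrite <- (to_I01_proj s) in Hs.
      destruct (Hf V HV (proj1_sig s) (proj2_sig s) Hs) as [eps [He Hq]].
      exists eps, (proj1_sig s). repeat split; try apply (proj2_sig s); auto.
      rewrite Rminus_diag, Rabs_R0; auto.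
    + intros [eps [x0 (_ & _ & Hd & Hball)]]. rewrite <- (to_I01_proj s). apply Hball; auto.
      apply (proj2_sig s).
Qed.

Definition sq (p : R * R) : Prop := 0 <= fst p <= 1 /\ 0 <= snd p <= 1.
Definition inB (a : R * R) (r : R) (q : R * R) : Prop :=
  Rabs (fst q - fst a) < r /\ Rabs (snd q - snd a) < r.
Definition cont_on (X : prestream) (S : R * R -> Prop) (f : R * R -> car X) : Prop :=
  forall V, sopen X V -> forall p, S p -> V (f p) ->
    exists eps, 0 < eps /\ forall q, S q -> inB p eps q -> V (f q).
Definition cont_sq (X : prestream) (f : R * R -> car X) : Prop := cont_on X sq f.

Lemma inB_tri a b c r1 r2 : inB a r1 b -> inB b r2 c -> inB a (r1 + r2) c.
Proof.
  intros [H1 H2] [H3 H4].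
  pose proof (Rabs_triang (fst c - fst b) (fst b - fst a)).
  pose proof (Rabs_triang (snd c - snd b) (snd b - snd a)).
  replace (fst c - fst b + (fst b - fst a)) with (fst c - fst a) in * by ring.
  replace (snd c - snd b + (snd b - snd a)) with (snd c - snd a) in * by ring.
  split; lra.
Qed.
Lemma inB_mono a b r r' : r <= r' -> inB a r b -> inB a r' b.
Proof. intros ? [? ?]; split; lra. Qed.
Lemma inB_refl a r : 0 < r -> inB a r a.
Proof. intros; split; rewrite Rminus_diag, Rabs_R0; auto. Qed.

Lemma cont_on_ext X S (f g : R * R -> car X) :
  cont_on X S f -> (forall p, S p -> f p = g p) -> cont_on X S g.
Proof.
  intros Hf Heq V HV p Hp HVp. rewrite <- Heq in HVp by auto.
  destruct (Hf V HV p Hp HVp) as [eps [He Hq]].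
  exists eps. split; auto. intros. rewrite <- Heq by auto. auto.
Qed.

Lemma cont_on_comp X S (A : R * R -> car X) (h : R * R -> R * R) :
  cont_sq X A -> (forall p, S p -> sq (h p)) ->
  (forall p q r, inB p r q -> inB (h p) (2 * r) (h q)) -> cont_on X S (fun p => A (h p)).
Proof.
  intros HA Hsq Hlip V HV p Hp HVp. destruct (HA V HV (h p) (Hsq p Hp) HVp) as [eps [He Hq]].
  exists (eps / 2). split; [lra|]. intros q Hq' Hpq. apply Hq; auto.
  replace eps with (2 * (eps / 2)) by field. auto.
Qed.

Lemma cont_sq_slice_y X (L : R * R -> car X) x :
  cont_sq X L -> 0 <= x <= 1 -> cont01 X (fun y => L (x, y)).
Proof.
  intros H Hx V HV y Hy HVy. destruct (H V HV (x, y) (conj Hx Hy) HVy) as [eps [He Hq]].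
  exists eps. split; auto. intros y' Hy' Hd. apply Hq; split; simpl; auto.
  rewrite Rminus_diag, Rabs_R0; auto.
Qed.
Lemma cont_sq_slice_x X (L : R * R -> car X) y :
  cont_sq X L -> 0 <= y <= 1 -> cont01 X (fun x => L (x, y)).
Proof.
  intros H Hy V HV x Hx HVx. destruct (H V HV (x, y) (conj Hx Hy) HVx) as [eps [He Hq]].
  exists eps. split; auto. intros x' Hx' Hd. apply Hq; split; simpl; auto.
  rewrite Rminus_diag, Rabs_R0; auto.
Qed.

Lemma cont_sq_sq_open X (L : R * R -> car X) : cont_sq X L ->
  forall V, sopen X V -> sq_open (fun s t => V (L (proj1_sig s, proj1_sig t))).
Proof.
  intros H V HV s t HVst.
  destruct (H V HV (proj1_sig s, proj1_sig t) (conj (proj2_sig s) (proj2_sig t)) HVst)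
    as [eps [He Hq]].
  exists eps. split; auto. intros s' t' H1 H2. apply Hq; [|split; auto].
  exact (conj (proj2_sig s') (proj2_sig t')).
Qed.

Lemma sq_open_cont_sq X (H : car I01 -> car I01 -> car X) :
  (forall V, sopen X V -> sq_open (fun s t => V (H s t))) ->
  cont_sq X (fun p => H (to_I01 (fst p)) (to_I01 (snd p))).
Proof.
  intros Hc V HV [x y] [Hx Hy] HVp. destruct (Hc V HV _ _ HVp) as [eps [He Hq]].
  exists eps. split; auto. intros [x' y'] [Hx' Hy'] [D1 D2]. simpl in *.
  apply Hq; simpl; rewrite !clamp_id; auto.
Qed.

Definition left_half (p : R * R) : Prop := sq p /\ fst p <= 1 / 2.
Definition right_half (p : R * R) : Prop := sq p /\ 1 / 2 <= fst p.

Lemma cont_glue_halves X (f : R * R -> car X) :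
  cont_on X left_half f -> cont_on X right_half f -> cont_sq X f.
Proof.
  intros Hl Hr V HV p Hp HVp.
  assert (Hleft : exists e, 0 < e /\ forall q, left_half q -> inB p e q -> V (f q)).
  { destruct (Rle_dec (fst p) (1 / 2)) as [Hx|Hx]; [exact (Hl V HV p (conj Hp Hx) HVp)|].
    exists (fst p - 1 / 2). split; [lra|]. intros q [_ Hq] [Hd _].
    exfalso. unfold Rabs in Hd; destruct Rcase_abs; lra. }
  assert (Hright : exists e, 0 < e /\ forall q, right_half q -> inB p e q -> V (f q)).
  { destruct (Rle_dec (1 / 2) (fst p)) as [Hx|Hx]; [exact (Hr V HV p (conj Hp Hx) HVp)|].
    exists (1 / 2 - fst p). split; [lra|]. intros q [_ Hq] [Hd _].
    exfalso. unfold Rabs in Hd; destruct Rcase_abs; lra. }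
  destruct Hleft as [e1 [He1 H1]]. destruct Hright as [e2 [He2 H2]].
  exists (Rmin e1 e2). split; [apply Rmin_glb_lt; auto|]. intros q Hq Hpq.
  destruct (Rle_dec (fst q) (1 / 2)).
  - apply H1; [split; auto|]. eapply inB_mono; [apply Rmin_l|exact Hpq].
  - apply H2; [split; auto; lra|]. eapply inB_mono; [apply Rmin_r|exact Hpq].
Qed.

Definition concat_sq {X : Type} (A1 A2 : R * R -> X) (p : R * R) : X :=
  if Rle_dec (fst p) (1 / 2) then A1 (2 * fst p, snd p) else A2 (2 - 2 * fst p, snd p).

Lemma concat_sq_cont X (A1 A2 : R * R -> car X) : cont_sq X A1 -> cont_sq X A2 ->
  (forall y, 0 <= y <= 1 -> A1 (1, y) = A2 (1, y)) -> cont_sq X (concat_sq A1 A2).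
Proof.
  intros C1 C2 Hedge. assert (Hdbl : forall a b, Rabs (2 * a - 2 * b) = 2 * Rabs (a - b)).
  { intros a b. replace (2 * a - 2 * b) with (2 * (a - b)) by ring.
    rewrite Rabs_mult, (Rabs_right 2); lra. }
  apply cont_glue_halves.
  - apply cont_on_ext with (f := fun p => A1 (2 * fst p, snd p)).
    + apply cont_on_comp; auto.
      * intros p [[Hx Hy] Hh]. split; simpl; lra.
      * intros p q r [D1 D2]. pose proof (Rabs_pos (snd q - snd p)).
        split; simpl; [rewrite Hdbl|]; lra.
    + intros p [_ Hh]. unfold concat_sq. destruct Rle_dec; [auto|lra].
  - apply cont_on_ext with (f := fun p => A2 (2 - 2 * fst p, snd p)).
    + apply cont_on_comp; auto.
      * intros p [[Hx Hy] Hh]. split; simpl; lra.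
      * intros p q r [D1 D2]. pose proof (Rabs_pos (snd q - snd p)).
        split; simpl; [|lra].
        replace (2 - 2 * fst q - (2 - 2 * fst p)) with (2 * fst p - 2 * fst q) by ring.
        rewrite Hdbl, Rabs_minus_sym. lra.
    + intros p [[_ Hy] Hh]. unfold concat_sq. destruct Rle_dec; auto.
      replace (fst p) with (1 / 2) by lra. replace (2 * (1 / 2)) with 1 by field.
      replace (2 - 1) with 1 by ring. symmetry. auto.
Qed.

Definition lin (a b : R * R) (t : R) : R * R :=
  (fst a + t * (fst b - fst a), snd a + t * (snd b - snd a)).

Lemma lin0 a b : lin a b 0 = a.
Proof. destruct a; unfold lin; simpl; f_equal; ring. Qed.
Lemma lin1 a b : lin a b 1 = b.
Proof. destruct a, b; unfold lin; simpl; f_equal; ring. Qed.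
Lemma lin_same a t : lin a a t = a.
Proof. destruct a; unfold lin; simpl; f_equal; ring. Qed.

Lemma convex01 a b t : 0 <= a <= 1 -> 0 <= b <= 1 -> 0 <= t <= 1 -> 0 <= a + t * (b - a) <= 1.
Proof. intros. nra. Qed.
Lemma lin_sq a b t : sq a -> sq b -> 0 <= t <= 1 -> sq (lin a b t).
Proof. intros [? ?] [? ?] ?. split; simpl; apply convex01; auto. Qed.

Lemma lin_ball c r a b t : inB c r a -> inB c r b -> 0 <= t <= 1 -> inB c r (lin a b t).
Proof.
  assert (Hconv : forall x y z, Rabs (x - z) < r -> Rabs (y - z) < r -> 0 <= t <= 1 ->
    Rabs (x + t * (y - x) - z) < r).
  { intros x y z H1 H2 Ht. replace (x + t * (y - x) - z) with ((1 - t) * (x - z) + t * (y - z)) by ring.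
    eapply Rle_lt_trans; [apply Rabs_triang|].
    rewrite !Rabs_mult, (Rabs_right (1 - t)), (Rabs_right t) by lra.
    destruct (Rlt_dec t 1).
    - assert ((1 - t) * Rabs (x - z) < (1 - t) * r) by (apply Rmult_lt_compat_l; lra).
      assert (t * Rabs (y - z) <= t * r) by (apply Rmult_le_compat_l; lra). lra.
    - replace t with 1 by lra. lra. }
  intros [? ?] [? ?] ?. split; simpl; apply Hconv; auto.
Qed.

Lemma lin_t_ball a b t s r : sq a -> sq b -> Rabs (t - s) < r -> inB (lin a b s) r (lin a b t).
Proof.
  assert (Hlip : forall x y, 0 <= x <= 1 -> 0 <= y <= 1 ->
    Rabs ((x + t * (y - x)) - (x + s * (y - x))) <= Rabs (t - s)).
  { intros x y Hx Hy. replace ((x + t * (y - x)) - (x + s * (y - x))) with ((t - s) * (y - x)) by ring.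
    rewrite Rabs_mult. assert (Rabs (y - x) <= 1) by (unfold Rabs; destruct Rcase_abs; lra).
    pose proof (Rabs_pos (t - s)). nra. }
  intros [? ?] [? ?] ?. split; simpl; eapply Rle_lt_trans; try apply Hlip; auto.
Qed.

Lemma lin_b_ball a b b' t r : 0 <= t <= 1 -> inB b r b' -> inB (lin a b t) r (lin a b' t).
Proof.
  intros Ht.
  assert (Hlip : forall x y y', Rabs ((x + t * (y' - x)) - (x + t * (y - x))) <= Rabs (y' - y)).
  { intros x y y'. replace ((x + t * (y' - x)) - (x + t * (y - x))) with (t * (y' - y)) by ring.
    rewrite Rabs_mult, (Rabs_right t) by lra. pose proof (Rabs_pos (y' - y)). nra. }
  intros [? ?]. split; simpl; eapply Rle_lt_trans; try apply Hlip; auto.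
Qed.

Lemma cont_sq_of_path X (g : car I01 -> car X) :
  continuous01 X g -> cont_sq X (fun p => g (to_I01 (snd p))).
Proof.
  intros Hg V HV [x y] [_ Hy] HVp. simpl in HVp.
  destruct (continuous01_cont01 X g Hg V HV y Hy HVp) as [eps [He Hball]].
  exists eps. split; auto. intros [x' y'] [_ Hy'] [_ Hd]. apply Hball; auto.
Qed.

Lemma dihomotopic_refl X (g : car I01 -> car X) : is_dipath X g -> dihomotopic X g g.
Proof.
  intros [Hg Hdir]. exists (fun _ t => g t). repeat split; auto.
  intros V HV s t HVt. rewrite <- (to_I01_proj t) in HVt.
  destruct (continuous01_cont01 X g Hg V HV (proj1_sig t) (proj2_sig t) HVt) as [eps [He Hball]].
  exists eps. split; auto. intros s' t' _ Hd. rewrite <- (to_I01_proj t').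
  apply Hball; auto. apply proj2_sig.
Qed.

Lemma concat_dihomotopies X (h1 h2 g : car I01 -> car X) :
  dihomotopic X h1 g -> dihomotopic X h2 g ->
  exists K : R * R -> car X, cont_sq X K /\
    (forall s : car I01, is_dipath X (fun t => K (proj1_sig s, proj1_sig t))) /\
    (forall t, K (0, proj1_sig t) = h1 t) /\ (forall t, K (1, proj1_sig t) = h2 t) /\
    (forall x, K (x, 0) = h1 i0 /\ K (x, 1) = h1 i1).
Proof.
  intros [H1 (Hc1 & Hd1 & Hend1 & Hs1 & Ht1)] [H2 (Hc2 & Hd2 & Hend2 & Hs2 & Ht2)].
  set (A1 := fun p : R * R => H1 (to_I01 (fst p)) (to_I01 (snd p))).
  set (A2 := fun p : R * R => H2 (to_I01 (fst p)) (to_I01 (snd p))).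
  exists (concat_sq A1 A2). split; [|split; [|split; [|split]]].
  - apply concat_sq_cont; try apply sq_open_cont_sq; auto.
    intros y _. unfold A1, A2. simpl. rewrite to_I01_1, Ht1, Ht2. auto.
  - assert (Hslice : forall H : car I01 -> car I01 -> car X, (forall s, is_dipath X (H s)) ->
      forall x, is_dipath X (fun t : car I01 => H (to_I01 x) (to_I01 (proj1_sig t)))).
    { intros H Hd x.
      replace (fun t : car I01 => H (to_I01 x) (to_I01 (proj1_sig t))) with (H (to_I01 x)); auto.
      apply functional_extensionality. intros t. rewrite to_I01_proj. auto. }
    intros s. unfold concat_sq, A1, A2. cbn [fst snd]. destruct Rle_dec; apply Hslice; auto.
  - intros t. unfold concat_sq, A1. simpl. destruct Rle_dec; [|lra].
    rewrite Rmult_0_r, to_I01_0, to_I01_proj. auto.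
  - intros t. unfold concat_sq, A2. simpl. destruct Rle_dec; [lra|].
    replace (2 - 2 * 1) with 0 by ring. rewrite to_I01_0, to_I01_proj. auto.
  - intros x. unfold concat_sq, A1, A2. cbn [fst snd]. rewrite to_I01_0, to_I01_1.
    destruct Rle_dec; [apply Hend1|].
    rewrite (proj1 (Hend2 _)), (proj2 (Hend2 _)).
    destruct (Hend1 i1) as [Hg0 Hg1]. rewrite Ht1 in Hg0, Hg1.
    destruct (Hend2 i1) as [Hg0' Hg1']. rewrite Ht2 in Hg0', Hg1'. split; congruence.
Qed.

Section CirculationFacts.
Variable X : prestream.
Hypothesis hX : is_stream X.

Lemma circ_ext (U V : car X -> Prop) x y :
  (forall z, U z <-> V z) -> circ X U x y -> circ X V x y.
Proof. intros H. destruct hX as (_&_&_&_&Hext&_). apply (proj1 (Hext U V H x y)). Qed.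

Lemma circ_closure (V : car X -> Prop) : sopen X V -> forall x y,
  circ X V x y <-> (V x /\ V y /\ clos_refl_trans _ (circ X V) x y).
Proof.
  intros HV x y. destruct hX as (_&_&_&_&Hext&Hcirc).
  set (O := fun Z : car X -> Prop => Z = V).
  assert (HO : forall W, O W -> sopen X W) by (intros W ->; auto).
  assert (Hunion : forall z, bigU O z <-> V z).
  { intros z; split; [intros [W [-> Hz]]; auto|]. intros Hz; exists V; split; auto; reflexivity. }
  assert (Hrt : forall a b,
    clos_refl_trans _ (fun a b => exists W, O W /\ circ X W a b) a b <->
    clos_refl_trans _ (circ X V) a b).
  { intros a b; split; intro H; induction H; eauto using rt_refl, rt_trans.
    - destruct H as [W [-> HW]]. apply rt_step; auto.
    - apply rt_step. exists V; split; auto; reflexivity. }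
  rewrite <- (Hext _ _ Hunion x y), (Hcirc O HO x y), Hunion, Hunion, Hrt. tauto.
Qed.

Lemma circ_refl V x : sopen X V -> V x -> circ X V x x.
Proof. intros HV Hx. apply circ_closure; auto. repeat split; auto. apply rt_refl. Qed.

Lemma circ_trans V x y z : sopen X V -> circ X V x y -> circ X V y z -> circ X V x z.
Proof.
  intros HV H1 H2. pose proof (proj1 (circ_closure V HV x y) H1) as (Hx & _).
  pose proof (proj1 (circ_closure V HV y z) H2) as (_ & Hz & _).
  apply circ_closure; auto. repeat split; auto. eapply rt_trans; apply rt_step; eauto.
Qed.

Lemma circ_mono A V x y : sopen X A -> sopen X V -> (forall z, A z -> V z) ->
  circ X A x y -> circ X V x y.
Proof.
  intros HA HV Hsub H. destruct hX as (_&_&_&_&Hext&Hcirc).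
  set (O := fun Z : car X -> Prop => Z = A \/ Z = V).
  assert (HO : forall W, O W -> sopen X W) by (intros W [->| ->]; auto).
  assert (Hunion : forall z, bigU O z <-> V z).
  { intros z; split; [intros [W [[->| ->] Hz]]; auto|].
    intros Hz; exists V; split; auto; right; reflexivity. }
  pose proof (proj1 (circ_closure A HA x y) H) as (Hx & Hy & _).
  apply (proj1 (Hext _ _ Hunion x y)), (proj2 (Hcirc O HO x y)).
  repeat split; try apply Hunion; auto. apply rt_step. exists A; split; auto. left; reflexivity.
Qed.
End CirculationFacts.

Definition sheet_family (E B : prestream) (rho : car E -> car B)
    (U : car B -> Prop) (F : (car E -> Prop) -> Prop) : Prop :=
  (forall W, F W -> sopen E W) /\
  (forall x, U (rho x) <-> bigU F x) /\
  (forall W1 W2 x, F W1 -> F W2 -> W1 x -> W2 x -> forall z, W1 z <-> W2 z) /\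
  (forall W, F W ->
     exists phi : car (substream E W) -> car (substream B U),
       (forall s, proj1_sig (phi s) = rho (proj1_sig s)) /\
       is_stream_iso (substream E W) (substream B U) phi).

Section Covering.
Variables E B : prestream.
Hypothesis hE : is_stream E.
Hypothesis hB : is_stream B.
Variable rho : car E -> car B.

Section Sheet.
Variables (U : car B -> Prop) (F : (car E -> Prop) -> Prop).
Hypothesis hF : sheet_family E B rho U F.

Lemma sheet_open W : F W -> sopen E W.
Proof. destruct hF as (H&_); auto. Qed.

Lemma sheet_over W e : F W -> W e -> U (rho e).
Proof. destruct hF as (_&H&_). intros; apply H. exists W; auto. Qed.

Lemma in_sheet e : U (rho e) -> exists W, F W /\ W e.
Proof. destruct hF as (_&H&_). intros Hu. apply H in Hu. exact Hu. Qed.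

Lemma sheet_disj W1 W2 x : F W1 -> F W2 -> W1 x -> W2 x -> forall z, W1 z <-> W2 z.
Proof. destruct hF as (_&_&H&_). eauto. Qed.

Lemma sheet_iso W : F W -> exists (phi : car (substream E W) -> car (substream B U))
   (psi : car (substream B U) -> car (substream E W)),
   (forall s, proj1_sig (phi s) = rho (proj1_sig s)) /\
   is_stream_map (substream B U) (substream E W) psi /\
   (forall x, psi (phi x) = x) /\ (forall y, phi (psi y) = y).
Proof.
  destruct hF as (_&_&_&H). intros HW. destruct (H W HW) as [phi [Hp [psi (_&H2&H3&H4)]]].
  exists phi, psi. auto.
Qed.

Lemma sheet_inj W e1 e2 : F W -> W e1 -> W e2 -> rho e1 = rho e2 -> e1 = e2.
Proof.
  intros HW H1 H2 Hr. destruct (sheet_iso W HW) as (phi&psi&Hp&_&Hpsi&_).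
  assert (Hphi : phi (exist _ e1 H1) = phi (exist _ e2 H2)) by (apply sig_ext; rewrite !Hp; auto).
  apply (f_equal psi) in Hphi. rewrite !Hpsi in Hphi. apply (f_equal (@proj1_sig _ _)) in Hphi.
  exact Hphi.
Qed.

Lemma sheet_surj W b : F W -> U b -> exists e, W e /\ rho e = b.
Proof.
  intros HW Hb. destruct (sheet_iso W HW) as (phi&psi&Hp&_&_&Hphi).
  exists (proj1_sig (psi (exist _ b Hb))). split; [apply proj2_sig|].
  rewrite <- Hp, Hphi. reflexivity.
Qed.

Lemma sheet_image W V : F W -> sopen E V ->
  exists O, sopen B O /\ forall e, W e -> (O (rho e) <-> V e).
Proof.
  intros HW HV. destruct (sheet_iso W HW) as (phi&psi&Hp&[Hc _]&Hpsi&_).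
  set (VW := fun s : car (substream E W) => V (proj1_sig s)).
  assert (HVW : sopen (substream E W) VW) by (exists V; split; auto; reflexivity).
  destruct (Hc _ HVW) as [O [HO HOi]].
  exists O. split; auto. intros e He. specialize (HOi (phi (exist _ e He))).
  rewrite Hp in HOi. unfold VW in HOi. rewrite Hpsi in HOi. simpl in HOi. tauto.
Qed.

Lemma sheet_circ W V O e1 e2 : F W -> sopen E V ->
  (forall e, W e -> (O (rho e) <-> V e)) -> W e1 -> W e2 ->
  circ B (fun b => O b /\ U b) (rho e1) (rho e2) -> circ E V e1 e2.
Proof.
  intros HW HV HOV H1 H2 Hc. destruct (sheet_iso W HW) as (phi&psi&Hp&[_ Hd]&Hpsi&Hphi).
  set (VW := fun s : car (substream E W) => V (proj1_sig s)).
  assert (HVW : sopen (substream E W) VW) by (exists V; split; auto; reflexivity).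
  specialize (Hd VW HVW (phi (exist _ e1 H1)) (phi (exist _ e2 H2))).
  rewrite !Hpsi in Hd. simpl in Hd.
  assert (HVWo : sopen E (fun z => V z /\ W z)).
  { destruct hE as (_&_&Hcap&_). apply Hcap; auto. apply sheet_open; auto. }
  eapply circ_mono; [exact hE|exact HVWo|exact HV|intros z [? ?]; auto|].
  eapply circ_ext; [exact hE| |apply Hd].
  - intros z; split; [intros [s [Hs <-]]; split; auto; apply proj2_sig|].
    intros [Hv Hw]. exists (exist _ z Hw). split; auto.
  - simpl. rewrite !Hp. simpl. eapply circ_ext; [exact hB| |exact Hc].
    intros b; split.
    + intros [Ob Ub]. exists (exist _ b Ub). split; auto. unfold VW.
      apply HOV; [apply proj2_sig|]. rewrite <- Hp, Hphi. exact Ob.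
    + intros [s [Hs <-]]. split; [|apply proj2_sig]. unfold VW in Hs.
      apply HOV in Hs; [|apply proj2_sig]. rewrite <- Hp, Hphi in Hs. exact Hs.
Qed.

Lemma sheet_dipath_circ W V (f : car I01 -> car E) s1 s2 : sopen B U -> F W -> sopen E V ->
  is_dipath B (fun t => rho (f t)) -> proj1_sig s1 <= proj1_sig s2 ->
  (forall s, proj1_sig s1 <= proj1_sig s <= proj1_sig s2 -> W (f s) /\ V (f s)) ->
  circ E V (f s1) (f s2).
Proof.
  intros HU HW HV [_ Hdir] H12 Hseg. destruct (sheet_image W V HW HV) as [O [HO HOV]].
  assert (HOU : sopen B (fun b => O b /\ U b)) by (destruct hB as (_&_&Hcap&_); apply Hcap; auto).
  destruct (Hseg s1) as [W1 _]; [lra|]. destruct (Hseg s2) as [W2 _]; [lra|].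
  apply (sheet_circ W V O); auto.
  apply (Hdir _ HOU). split; auto. intros s Hs. destruct (Hseg s Hs) as [Ws Vs].
  split; [apply HOV; auto|apply (sheet_over W); auto].
Qed.

Lemma sheet_lift_cont {D : Type} (m : D -> car E) (k : D -> car B) (S : D -> Prop) W :
  F W -> (forall z, S z -> W (m z) /\ rho (m z) = k z) ->
  forall V, sopen E V -> forall z0, S z0 -> V (m z0) ->
  exists O, sopen B O /\ O (k z0) /\ forall z, S z -> O (k z) -> V (m z).
Proof.
  intros HW Hm V HV z0 Hz0 HVz. destruct (sheet_image W V HW HV) as [O [HO HOV]].
  exists O. split; auto. destruct (Hm z0 Hz0) as [Hw Hr]. split.
  - rewrite <- Hr. apply HOV; auto.
  - intros z Hz Ok. destruct (Hm z Hz) as [Hw' Hr']. apply HOV; auto. rewrite Hr'; auto.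
Qed.
End Sheet.

Hypothesis hcov : forall b, exists U, sopen B U /\ U b /\ exists F, sheet_family E B rho U F.

(** By the Lebesgue
    lemma both maps stay, on intervals of a fixed length, in single sheets of
    one family, where [rho] is injective; agreement then propagates. *)
Lemma lift_unique (l1 l2 : R -> car E) : cont01 E l1 -> cont01 E l2 ->
  (forall u, 0 <= u <= 1 -> rho (l1 u) = rho (l2 u)) ->
  forall a, 0 <= a <= 1 -> l1 a = l2 a -> forall u, 0 <= u <= 1 -> l1 u = l2 u.
Proof.
  intros Hc1 Hc2 Hr a Ha Hla.
  destruct (lebesgue_number_1d (fun x r => exists U F W1 W2,
     sheet_family E B rho U F /\ F W1 /\ F W2 /\
     forall x', 0 <= x' <= 1 -> Rabs (x' - x) < r -> W1 (l1 x') /\ W2 (l2 x')))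
    as [dl [Hdl Hsheets]].
  { intros x r x' r' (U & F & W1 & W2 & HF & HW1 & HW2 & Hin) Hr' Hx.
    exists U, F, W1, W2. do 3 (split; [assumption|]).
    intros x'' Hx'' Hd. apply Hin; auto. eapply ball_shrink; eauto. }
  { intros x Hx. destruct (hcov (rho (l1 x))) as [U [_ [Hux [F HF]]]].
    destruct (in_sheet U F HF (l1 x) Hux) as [W1 [HW1 Hx1]].
    rewrite (Hr x Hx) in Hux. destruct (in_sheet U F HF (l2 x) Hux) as [W2 [HW2 Hx2]].
    destruct (Hc1 W1 (sheet_open U F HF W1 HW1) x Hx Hx1) as [e1 [He1 H1]].
    destruct (Hc2 W2 (sheet_open U F HF W2 HW2) x Hx Hx2) as [e2 [He2 H2]].
    exists (Rmin e1 e2). split; [apply Rmin_glb_lt; auto|].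
    exists U, F, W1, W2. do 3 (split; [assumption|]). intros x' Hx' Hd.
    pose proof (Rmin_l e1 e2). pose proof (Rmin_r e1 e2). split; [apply H1|apply H2]; auto; lra. }
  assert (Hstep : forall u u', 0 <= u <= 1 -> 0 <= u' <= 1 -> Rabs (u - u') < dl ->
    l1 u' = l2 u' -> l1 u = l2 u).
  { intros u u' Hu Hu' Hd Heq.
    destruct (Hsheets u' Hu') as (U & F & W1 & W2 & HF & HW1 & HW2 & Hin).
    destruct (Hin u Hu Hd) as [A1 A2].
    destruct (Hin u' Hu') as [B1 B2]; [rewrite Rminus_diag, Rabs_R0; lra|].
    rewrite Heq in B1. apply (sheet_disj U F HF W2 W1 _ HW2 HW1 B2 B1) in A2.
    apply (sheet_inj U F HF W1); auto. }
  intros u Hu. destruct (Rle_dec a u) as [Hau|Hua].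
  - apply (chain_forward (fun t => l1 t = l2 t) a u dl); auto.
    intros t t' Hat Htt' Ht'u Hd Heq. apply (Hstep t' t); try lra; auto.
    rewrite Rabs_right; lra.
  - rewrite <- (Ropp_involutive u).
    apply (chain_forward (fun t => l1 (- t) = l2 (- t)) (- a) (- u) dl); try lra.
    + rewrite Ropp_involutive. auto.
    + intros t t' Hat Htt' Ht'u Hd Heq. apply (Hstep (- t') (- t)); try lra; auto.
      rewrite Rabs_left1; lra.
Qed.

(** Fix a continuous [K : square -> B] and a radius
    [dl] such that [K] maps every [dl]-ball of the square into an evenly
    covered set.  Choosing such a chart at each point, [transport a e z]
    moves a point [e] lying over the [dl]-ball at [a] to the point over [K z]
    in the same sheet.  Transports compose (a cocycle identity, proved by
    unique lifting along a segment), and the lift of [K] at [q] is obtained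
    by transporting the base point [e0] along the segment from [p0] to [q]
    in [N] steps of length below [dl/2]. *)
Section SquareLifting.
Variable K : R * R -> car B.
Hypothesis hK : cont_sq B K.
Variable dl : R.
Hypothesis hdl : 0 < dl.

Definition chart_at (a : R * R) (UF : (car B -> Prop) * ((car E -> Prop) -> Prop)) : Prop :=
  sheet_family E B rho (fst UF) (snd UF) /\ forall q, sq q -> inB a dl q -> fst UF (K q).
Hypothesis hcharts : forall a, sq a -> exists UF, chart_at a UF.

Definition chart (a : R * R) : (car B -> Prop) * ((car E -> Prop) -> Prop) :=
  epsilon (inhabits ((fun _ : car B => True), (fun _ : car E -> Prop => True))) (chart_at a).

Lemma chart_spec a : sq a -> chart_at a (chart a).
Proof. intros. unfold chart. apply epsilon_spec. auto. Qed.

Definition in_chart (a : R * R) (e : car E) : Prop := exists W, snd (chart a) W /\ W e.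

Definition transported (a : R * R) (e : car E) (z : R * R) (e' : car E) : Prop :=
  exists W, snd (chart a) W /\ W e /\ W e' /\ rho e' = K z.
Definition transport (a : R * R) (e : car E) (z : R * R) : car E :=
  epsilon (inhabits e) (transported a e z).

Lemma in_chart_over a b e : sq a -> sq b -> inB a dl b -> rho e = K b -> in_chart a e.
Proof.
  intros Ha Hb Hab He. destruct (chart_spec a Ha) as [HF Hin].
  apply (in_sheet _ _ HF). rewrite He. auto.
Qed.

Lemma transport_spec a e z : sq a -> sq z -> inB a dl z -> in_chart a e ->
  transported a e z (transport a e z).
Proof.
  intros Ha Hz Haz [W [HW He]]. unfold transport. apply epsilon_spec.
  destruct (chart_spec a Ha) as [HF Hin].
  destruct (sheet_surj _ _ HF W (K z) HW (Hin z Hz Haz)) as [e' [He' Hr]].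
  exists e', W. auto.
Qed.

Lemma transported_unique a e z e1 e2 : sq a ->
  transported a e z e1 -> transported a e z e2 -> e1 = e2.
Proof.
  intros Ha (W1 & HW1 & He1 & H1 & Hr1) (W2 & HW2 & He2 & H2 & Hr2).
  destruct (chart_spec a Ha) as [HF _].
  apply (sheet_disj _ _ HF W2 W1 e HW2 HW1 He2 He1) in H2.
  apply (sheet_inj _ _ HF W1); auto. congruence.
Qed.

Lemma transport_over a e z : sq a -> sq z -> inB a dl z -> in_chart a e ->
  rho (transport a e z) = K z.
Proof. intros. destruct (transport_spec a e z) as (W & _ & _ & _ & Hr); auto. Qed.

Lemma transport_self a b e : sq a -> sq b -> inB a dl b -> rho e = K b -> transport a e b = e.
Proof.
  intros Ha Hb Hab He. destruct (in_chart_over a b e Ha Hb Hab He) as [W [HW Hw]].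
  apply (transported_unique a e b); auto.
  - apply transport_spec; auto. exists W; auto.
  - exists W. auto.
Qed.

Lemma transport_along c ec W b z : sq c -> sq b -> sq z -> inB c dl b -> inB c dl z ->
  snd (chart c) W -> W ec ->
  cont01 E (fun u => transport c ec (lin b z (clamp u))) /\
  forall u, 0 <= u <= 1 -> rho (transport c ec (lin b z (clamp u))) = K (lin b z (clamp u)).
Proof.
  intros Hc Hb Hz Hcb Hcz HW Hec. set (seg := fun u => lin b z (clamp u)).
  assert (Hseg : forall u, sq (seg u) /\ inB c dl (seg u)).
  { intros u. pose proof (clamp_in u). split; [apply lin_sq|apply lin_ball]; auto. }
  destruct (chart_spec c Hc) as [HF _].
  assert (Hsheet : forall u, 0 <= u <= 1 -> W (transport c ec (seg u)) /\
                                        rho (transport c ec (seg u)) = K (seg u)).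
  { intros u _. destruct (Hseg u) as [Hs Hcs].
    destruct (transport_spec c ec (seg u)) as (W' & HW' & Hec' & Hw' & Hr); auto.
    - exists W; auto.
    - split; auto. apply (sheet_disj _ _ HF W' W ec HW' HW Hec' Hec); auto. }
  split; [|apply Hsheet]. intros V HV u Hu HVu.
  destruct (sheet_lift_cont _ _ HF (fun u => transport c ec (seg u)) (fun u => K (seg u))
    (fun u => 0 <= u <= 1) W HW Hsheet V HV u Hu HVu) as [O [HO [HOu HOV]]].
  destruct (hK O HO (seg u) (proj1 (Hseg u)) HOu) as [eps [Heps Hball]].
  exists eps. split; auto. intros u' Hu' Hd. apply HOV; auto. apply Hball; [apply Hseg|].
  unfold seg. rewrite (clamp_id u Hu), (clamp_id u' Hu'). apply lin_t_ball; auto.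
Qed.

Lemma transport_cocycle a b z e : sq a -> sq b -> sq z ->
  inB a dl b -> inB a dl z -> inB b dl z -> rho e = K a ->
  transport b (transport a e b) z = transport a e z.
Proof.
  intros Ha Hb Hz Hab Haz Hbz He. set (eb := transport a e b).
  destruct (in_chart_over a a e Ha Ha (inB_refl a dl hdl) He) as [Wa [HWa Hea]].
  assert (Heb : rho eb = K b) by (apply transport_over; auto; exists Wa; auto).
  destruct (in_chart_over b b eb Hb Hb (inB_refl b dl hdl) Heb) as [Wb [HWb Hebb]].
  destruct (transport_along a e Wa b z) as [C1 M1]; auto.
  destruct (transport_along b eb Wb b z) as [C2 M2]; auto; [apply inB_refl; auto|].
  assert (Hs0 : lin b z (clamp 0) = b) by (rewrite clamp_id by lra; apply lin0).
  assert (Hs1 : lin b z (clamp 1) = z) by (rewrite clamp_id by lra; apply lin1).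
  assert (Hsame : forall u, 0 <= u <= 1 ->
    transport a e (lin b z (clamp u)) = transport b eb (lin b z (clamp u))).
  { apply lift_unique with (a := 0); auto; [|lra|].
    - intros u Hu. rewrite M1, M2; auto.
    - rewrite Hs0. symmetry. apply transport_self; auto. apply inB_refl; auto. }
  pose proof (Hsame 1 ltac:(lra)) as H1. rewrite Hs1 in H1. symmetry. exact H1.
Qed.

Section Radial.
Variable p0 : R * R.
Variable e0 : car E.
Hypothesis hp0 : sq p0.
Hypothesis he0 : rho e0 = K p0.
Variable N : nat.
Hypothesis hN : 0 < INR N.
Hypothesis hNdl : / INR N < dl / 2.

Definition radial (q : R * R) (k : nat) : R * R := lin p0 q (INR k / INR N).

Lemma radial_param k : (k <= N)%nat -> 0 <= INR k / INR N <= 1.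
Proof.
  intros Hk. apply le_INR in Hk. pose proof (pos_INR k). split.
  - apply Rmult_le_pos; auto. left; apply Rinv_0_lt_compat; auto.
  - apply (Rmult_le_reg_r (INR N)); auto. unfold Rdiv. rewrite Rmult_assoc, Rinv_l by lra. lra.
Qed.

Lemma radial_sq q k : sq q -> (k <= N)%nat -> sq (radial q k).
Proof. intros. apply lin_sq; auto. apply radial_param; auto. Qed.

Lemma radial_step q k : sq q -> inB (radial q k) (dl / 2) (radial q (S k)).
Proof.
  intros Hq. apply lin_t_ball; auto. rewrite S_INR.
  replace ((INR k + 1) / INR N - INR k / INR N) with (/ INR N) by (field; lra).
  rewrite Rabs_right; [lra|]. left; apply Rinv_0_lt_compat; auto.
Qed.

Lemma radial_near q q' k r : (k <= N)%nat -> inB q r q' -> inB (radial q k) r (radial q' k).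
Proof. intros. apply lin_b_ball; auto. apply radial_param; auto. Qed.

Lemma radial_0 q : radial q 0 = p0.
Proof. unfold radial. simpl. unfold Rdiv. rewrite Rmult_0_l. apply lin0. Qed.
Lemma radial_N q : radial q N = q.
Proof. unfold radial. replace (INR N / INR N) with 1 by (field; lra). apply lin1. Qed.

Fixpoint radial_steps (q : R * R) (k : nat) : car E :=
  match k with
  | O => e0
  | S k' => transport (radial q k') (radial_steps q k') (radial q (S k'))
  end.

Definition radial_lift (q : R * R) : car E := radial_steps q N.

Lemma radial_steps_over q : sq q -> forall k, (k <= N)%nat -> rho (radial_steps q k) = K (radial q k).
Proof.
  intros Hq. induction k as [|k IH]; intros Hk; simpl; [rewrite radial_0; auto|].
  assert (Hk' : (k <= N)%nat) by lia. pose proof (radial_sq q k Hq Hk').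
  apply transport_over; try apply radial_sq; auto.
  - eapply inB_mono; [|apply radial_step; auto]. lra.
  - apply (in_chart_over _ (radial q k)); auto. apply inB_refl; auto.
Qed.

Lemma radial_steps_near q q' : sq q -> sq q' -> inB q (dl / 2) q' ->
  forall k, (k <= N)%nat -> radial_steps q' k = transport (radial q k) (radial_steps q k) (radial q' k).
Proof.
  intros Hq Hq' Hqq. induction k as [|k IH]; intros Hk.
  - simpl. rewrite !radial_0. symmetry. apply transport_self; auto. apply inB_refl; auto.
  - assert (Hk' : (k <= N)%nat) by lia. simpl. rewrite IH by auto.
    pose proof (radial_sq q k Hq Hk') as S1. pose proof (radial_sq q (S k) Hq Hk) as S2.
    pose proof (radial_sq q' k Hq' Hk') as S3. pose proof (radial_sq q' (S k) Hq' Hk) as S4.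
    pose proof (radial_step q k Hq) as D1. pose proof (radial_step q' k Hq') as D2.
    pose proof (radial_near q q' k _ Hk' Hqq) as D3.
    pose proof (radial_near q q' (S k) _ Hk Hqq) as D4.
    assert (D5 : inB (radial q k) dl (radial q' (S k))).
    { replace dl with (dl / 2 + dl / 2) by field. eapply inB_tri; eauto. }
    pose proof (radial_steps_over q Hq k Hk') as Hover.
    rewrite (transport_cocycle (radial q k) (radial q' k) (radial q' (S k))); auto;
      try (eapply inB_mono; [|eassumption]; lra).
    rewrite (transport_cocycle (radial q k) (radial q (S k)) (radial q' (S k))); auto;
      try (eapply inB_mono; [|eassumption]; lra).
Qed.

Lemma radial_lift_over q : sq q -> rho (radial_lift q) = K q.
Proof. intros. unfold radial_lift. rewrite radial_steps_over, radial_N; auto. Qed.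

Lemma radial_lift_near q q' : sq q -> sq q' -> inB q (dl / 2) q' ->
  radial_lift q' = transport q (radial_lift q) q'.
Proof. intros. unfold radial_lift. rewrite (radial_steps_near q q'), !radial_N; auto. Qed.

Lemma radial_lift_base : radial_lift p0 = e0.
Proof.
  assert (Hsteps : forall k, radial_steps p0 k = e0).
  { induction k as [|k IH]; simpl; auto. rewrite IH. unfold radial. rewrite !lin_same.
    apply transport_self; auto. apply inB_refl; auto. }
  apply Hsteps.
Qed.

(** Near [q] the lift stays in one sheet over [K], hence is continuous. *)
Lemma radial_lift_cont : cont_sq E radial_lift.
Proof.
  intros V HV q Hq HVq.
  destruct (in_chart_over q q (radial_lift q) Hq Hq (inB_refl q dl hdl) (radial_lift_over q Hq))
    as [W [HW Hw]].
  destruct (chart_spec q Hq) as [HF _].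
  assert (Hsheet : forall q', sq q' /\ inB q (dl / 2) q' ->
    W (radial_lift q') /\ rho (radial_lift q') = K q').
  { intros q' [Hq' Hd]. split; [|apply radial_lift_over; auto].
    rewrite (radial_lift_near q q' Hq Hq' Hd).
    destruct (transport_spec q (radial_lift q) q') as (W' & HW' & Hw' & Hq'W' & _); auto.
    - eapply inB_mono; [|exact Hd]; lra.
    - exists W; auto.
    - apply (sheet_disj _ _ HF W' W (radial_lift q) HW' HW Hw' Hw); auto. }
  destruct (sheet_lift_cont _ _ HF radial_lift K (fun q' => sq q' /\ inB q (dl / 2) q') W HW
    Hsheet V HV q (conj Hq (inB_refl q (dl / 2) ltac:(lra))) HVq) as [O [HO [HOq HOV]]].
  destruct (hK O HO q Hq HOq) as [eps [Heps Hball]].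
  exists (Rmin eps (dl / 2)). split; [apply Rmin_glb_lt; lra|].
  intros q' Hq' Hd. apply HOV.
  - split; auto. eapply inB_mono; [|exact Hd]; apply Rmin_r.
  - apply Hball; auto. eapply inB_mono; [|exact Hd]; apply Rmin_l.
Qed.
End Radial.
End SquareLifting.

Lemma square_lift (K : R * R -> car B) : cont_sq B K -> forall p0 e0, sq p0 -> rho e0 = K p0 ->
  exists L : R * R -> car E, cont_sq E L /\ (forall q, sq q -> rho (L q) = K q) /\ L p0 = e0.
Proof.
  intros hK p0 e0 hp0 he0.
  destruct (lebesgue_number (fun x y r => exists UF, chart_at K r (x, y) UF)) as [dl [Hdl Hcharts]].
  { intros x y r x' y' r' [UF [HF Hin]] Hr' Hx Hy. exists UF. split; auto.
    intros q Hq [Hq1 Hq2]. apply Hin; auto. split; simpl in *; eapply ball_shrink; eauto. }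
  { intros x y Hx Hy. destruct (hcov (K (x, y))) as [U [HU [Hu [F HF]]]].
    destruct (hK U HU (x, y) (conj Hx Hy) Hu) as [eps [Heps Hball]].
    exists eps. split; auto. exists (U, F). split; auto. }
  destruct (INR_archimed (dl / 2) 1) as [N HN]; [lra|].
  assert (HN0 : 0 < INR N) by (destruct N; simpl in HN; [lra|apply lt_0_INR; lia]).
  assert (HNdl : / INR N < dl / 2).
  { apply (Rmult_lt_reg_l (INR N)); auto. rewrite Rinv_r by lra. lra. }
  exists (radial_lift K dl p0 e0 N). split; [|split].
  - apply radial_lift_cont; auto. intros [x y] [Hx Hy]. auto.
  - intros. apply radial_lift_over; auto. intros [x y] [Hx Hy]. auto.
  - apply radial_lift_base; auto. intros [x y] [Hx Hy]. auto.
Qed.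

(** A continuous lift of a dipath is a dipath: cut the parameter interval
    into pieces, each mapped into a single sheet, where [sheet_dipath_circ]
    applies, and chain the pieces by transitivity of [<=_V]. *)
Lemma lift_dipath (f : car I01 -> car E) : cont01 E (fun x => f (to_I01 x)) ->
  is_dipath B (fun t => rho (f t)) -> is_dipath E f.
Proof.
  intros Hc Hd. split; [apply cont01_continuous01; auto|].
  intros V HV x y [Hxy Hin].
  destruct (lebesgue_number_1d (fun a r => exists U F W,
     sopen B U /\ sheet_family E B rho U F /\ F W /\
     forall a', 0 <= a' <= 1 -> Rabs (a' - a) < r -> W (f (to_I01 a')))) as [dl [Hdl Hsheets]].
  { intros a r a' r' (U & F & W & HU & HF & HW & HinW) Hr' Ha.
    exists U, F, W. do 3 (split; [assumption|]). intros a'' Ha'' Hd'.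
    apply HinW; auto. eapply ball_shrink; eauto. }
  { intros a Ha. destruct (hcov (rho (f (to_I01 a)))) as [U [HU [Hua [F HF]]]].
    destruct (in_sheet U F HF _ Hua) as [W [HW Hw]].
    destruct (Hc W (sheet_open U F HF W HW) a Ha Hw) as [eps [He Hball]].
    exists eps. split; auto. exists U, F, W. auto. }
  pose proof (proj2_sig x) as Hx. pose proof (proj2_sig y) as Hy. simpl in Hx, Hy.
  rewrite <- (to_I01_proj y).
  apply (chain_forward (fun t => circ E V (f x) (f (to_I01 t))) (proj1_sig x) (proj1_sig y) dl);
    auto.
  - rewrite to_I01_proj. apply circ_refl; auto. apply Hin. lra.
  - intros t t' Hxt Htt' Ht'y Hd' Hq. eapply circ_trans; [exact hE|exact HV|exact Hq|].
    destruct (Hsheets t ltac:(lra)) as (U & F & W & HU & HF & HW & HinW).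
    apply (sheet_dipath_circ U F HF W V); auto; rewrite !proj_to_I01 by lra; [lra|].
    intros s Hs. split.
    + rewrite <- (to_I01_proj s). apply HinW; [apply proj2_sig|]. rewrite Rabs_right; lra.
    + apply Hin. lra.
Qed.

Lemma dipath_lift (g : car I01 -> car B) : is_dipath B g -> forall j0 c, rho c = g j0 ->
  exists f, is_dipath E f /\ f j0 = c /\ forall t, rho (f t) = g t.
Proof.
  intros Hg j0 c Hc.
  destruct (square_lift _ (cont_sq_of_path B g (proj1 Hg)) (0, proj1_sig j0) c) as [L (HL & HLo & HL0)].
  { split; simpl; [lra|apply (proj2_sig j0)]. }
  { simpl. rewrite to_I01_proj. auto. }
  assert (Hover : forall t : car I01, rho (L (0, proj1_sig t)) = g t).
  { intros t. rewrite HLo; [simpl; rewrite to_I01_proj; auto|]. split; [simpl; lra|apply (proj2_sig t)]. }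
  exists (fun t => L (0, proj1_sig t)). split; [|split; auto].
  apply lift_dipath.
  - apply (cont01_ext E (fun y => L (0, y))); [apply cont_sq_slice_y; auto; lra|].
    intros. rewrite proj_to_I01; auto.
  - replace (fun t : car I01 => rho (L (0, proj1_sig t))) with g; auto.
    apply functional_extensionality. intros t. auto.
Qed.

Lemma square_dihomotopy (L : R * R -> car E) (f1 f2 : car I01 -> car E) : cont_sq E L ->
  (forall s : car I01, is_dipath B (fun t => rho (L (proj1_sig s, proj1_sig t)))) ->
  (forall t, L (0, proj1_sig t) = f1 t) -> (forall t, L (1, proj1_sig t) = f2 t) ->
  (forall s : car I01, L (proj1_sig s, 0) = f1 i0 /\ L (proj1_sig s, 1) = f1 i1) ->
  dihomotopic E f1 f2.
Proof.
  intros HL Hslices H0 H1 Hends. exists (fun s t => L (proj1_sig s, proj1_sig t)).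
  split; [apply cont_sq_sq_open; auto|]. split; [|split; [apply Hends|split; auto]].
  intros s. apply lift_dipath; auto.
  apply (cont01_ext E (fun y => L (proj1_sig s, y))).
  - apply cont_sq_slice_y; auto. apply (proj2_sig s).
  - intros. rewrite proj_to_I01; auto.
Qed.

Lemma lift_slice_unique (L : R * R -> car E) (K : R * R -> car B) x (f : car I01 -> car E) j0 :
  cont_sq E L -> (forall q, sq q -> rho (L q) = K q) -> 0 <= x <= 1 -> continuous01 E f ->
  (forall t, K (x, proj1_sig t) = rho (f t)) -> L (x, proj1_sig j0) = f j0 ->
  forall t, L (x, proj1_sig t) = f t.
Proof.
  intros HL HLo Hx Hf Hover Hj0 t. rewrite <- (to_I01_proj t) at 2.
  apply (lift_unique (fun y => L (x, y)) (fun y => f (to_I01 y))) with (a := proj1_sig j0);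
    try apply proj2_sig.
  - apply cont_sq_slice_y; auto.
  - apply continuous01_cont01; auto.
  - intros u Hu. rewrite HLo by (split; auto). rewrite <- (proj_to_I01 u Hu) at 1. apply Hover.
  - rewrite to_I01_proj. auto.
Qed.

(** The two
    dihomotopies are glued into a square map, which is lifted through [c];
    by unique lifting, the edges of the lift are [f1], [f2] and constants. *)
Lemma lift_dihomotopy_unique (j0 : car I01) (f1 f2 : car I01 -> car E) (g : car I01 -> car B) c :
  j0 = i0 \/ j0 = i1 -> is_dipath E f1 -> is_dipath E f2 -> f1 j0 = c -> f2 j0 = c ->
  dihomotopic B (fun t => rho (f1 t)) g -> dihomotopic B (fun t => rho (f2 t)) g ->
  dihomotopic E f1 f2.
Proof.
  intros Hj0 Hf1 Hf2 Hc1 Hc2 Hh1 Hh2.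
  destruct (concat_dihomotopies B _ _ _ Hh1 Hh2) as [K (HK & Hslices & K0 & K1 & Kends)].
  assert (Hflat : forall j, j = i0 \/ j = i1 -> forall x, K (x, proj1_sig j) = rho (f1 j))
    by (intros j [-> | ->] x; [exact (proj1 (Kends x))|exact (proj2 (Kends x))]).
  pose proof (proj2_sig j0) as Hj. simpl in Hj.
  destruct (square_lift K HK (0, proj1_sig j0) c) as [L (HL & HLo & HL0)].
  { split; simpl; [lra|auto]. }
  { rewrite K0, Hc1. auto. }
  assert (Hleft : forall t, L (0, proj1_sig t) = f1 t).
  { apply (lift_slice_unique L K 0 f1 j0); auto; [lra|exact (proj1 Hf1)|congruence]. }
  assert (Hedge : forall j, j = i0 \/ j = i1 -> forall x, 0 <= x <= 1 -> L (x, proj1_sig j) = f1 j).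
  { intros j Hj' x Hx. pose proof (proj2_sig j) as Hjr. simpl in Hjr. rewrite <- Hleft.
    apply (lift_unique (fun x => L (x, proj1_sig j)) (fun _ => L (0, proj1_sig j))) with (a := 0);
      auto; try lra.
    - apply cont_sq_slice_x; auto.
    - apply cont01_const.
    - intros u Hu. rewrite HLo by (split; auto). rewrite Hleft. auto. }
  apply (square_dihomotopy L); auto.
  - intros s. replace (fun t : car I01 => rho (L (proj1_sig s, proj1_sig t)))
      with (fun t : car I01 => K (proj1_sig s, proj1_sig t)); auto.
    apply functional_extensionality. intros t. rewrite HLo; auto. exact (conj (proj2_sig s) (proj2_sig t)).
  - apply (lift_slice_unique L K 1 f2 j0); auto; [lra|exact (proj1 Hf2)|].
    rewrite Hedge, Hc1, Hc2; auto. lra.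
  - intros s. split; [apply (Hedge i0)|apply (Hedge i1)]; auto; apply (proj2_sig s).
Qed.
End Covering.

Theorem mainTheorem11 (E B : prestream) (hE : is_stream E) (hB : is_stream B)
  (rho : car E -> car B) (hrho : is_stream_covering E B rho) :
  op_fibration (T1f rho) /\ op_fibration (opfunctor (T1f rho)).
Proof.
  destruct hrho as (_ & _ & hcov).
  assert (Hfib : forall j0, j0 = i0 \/ j0 = i1 -> forall c (g : car I01 -> car B),
    is_dipath B g -> g j0 = rho c ->
    (exists f, is_dipath E f /\ f j0 = c /\ dihomotopic B (fun t => rho (f t)) g) /\
    (forall f1 f2, is_dipath E f1 -> is_dipath E f2 -> f1 j0 = c -> f2 j0 = c ->
       dihomotopic B (fun t => rho (f1 t)) g -> dihomotopic B (fun t => rho (f2 t)) g ->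
       dihomotopic E f1 f2)).
  { intros j0 Hj0 c g Hg Hgc. split.
    - destruct (dipath_lift E B hE hB rho hcov g Hg j0 c (eq_sym Hgc)) as [f (Hf & Hfc & Hfg)].
      exists f. split; [auto|split; [auto|]].
      replace (fun t => rho (f t)) with g by (apply functional_extensionality; auto).
      apply dihomotopic_refl; auto.
    - intros. apply (lift_dihomotopy_unique E B hE hB rho hcov j0 f1 f2 g c); auto. }
  split; intros c g Hg Hsrc; apply Hfib; auto.
Qed.
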